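(* Let $\phi_0=0$. For each $a\in(-\tfrac12,\tfrac12)$ let $s_1(a)$ be the first positive zero of $f_a$. Then the image of $X_a:[-s_1(a),s_1(a)]\times\mathbb{S}^1\to\mathbb{S}^3$ is contained in the closed geodesic ball $B_{r(a)}(p_N)=\mathbb{S}^3\cap\{x^1\ge x_a(s_1(a))\}$, where $r(a)=\arccos x_a(s_1(a))$, and $r(a)<\tfrac\pi2$ if $a\in(-\tfrac12,0)$, $r(a)=\tfrac\pi2$ if $a=0$, $r(a)>\tfrac\pi2$ if $a\in(0,\tfrac12)$.
   Context: For $a\in(-\tfrac12,\tfrac12)$ and $\phi_0,t,s\in\mathbb{R}$ define $\psi(a,t)=\dfrac{(\frac14-a^2)^{1/2}}{(\frac12+a\cos 2t)^{1/2}(\frac12-a\cos 2t)}$, $\phi(a,s)=\phi_0+\int_0^s\psi(a,t)\,dt$, $x_a(s)=(\frac12-a\cos 2s)^{1/2}\cos\phi(a,s)$, $y_a(s)=(\frac12-a\cos 2s)^{1/2}\sin\phi(a,s)$, $z_a(s)=(\frac12+a\cos 2s)^{1/2}$, and $X_a:\mathbb{R}\times\mathbb{S}^1\to\mathbb{S}^3\subset\mathbb{R}^4$, $X_a(s,\theta)=(x_a(s),y_a(s),z_a(s)\cos\theta,z_a(s)\sin\theta)$. Define $f_a(s)=a\sin(2s)\sin\phi(a,s)+(\tfrac14-a^2)^{1/2}(\tfrac12+a\cos 2s)^{1/2}\cos\phi(a,s)$ (it has positive zeros). $p_N=(1,0,0,0)$ and $B_r(p_N)$ is the closed geodesic ball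 in $\mathbb{S}^3$ of radius $r$ centered at $p_N$, i.e. $\mathbb{S}^3\cap\{x^1\ge\cos r\}$. *)

From Stdlib Require Import Reals.
From Coquelicot Require Import Coquelicot.
Open Scope R_scope.

Definition psi (a t : R) : R :=
  sqrt (1/4 - a^2) / (sqrt (1/2 + a * cos (2*t)) * (1/2 - a * cos (2*t))).

Definition phi (phi0 a s : R) : R := phi0 + RInt (psi a) 0 s.

Definition xa (phi0 a s : R) : R := sqrt (1/2 - a * cos (2*s)) * cos (phi phi0 a s).
Definition ya (phi0 a s : R) : R := sqrt (1/2 - a * cos (2*s)) * sin (phi phi0 a s).
Definition za (a s : R) : R := sqrt (1/2 + a * cos (2*s)).

Definition Xa (phi0 a s theta : R) : R * R * R * R :=
  (xa phi0 a s, ya phi0 a s, za a s * cos theta, za a s * sin theta).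

Definition fa (phi0 a s : R) : R :=
  a * sin (2*s) * sin (phi phi0 a s)
  + sqrt (1/4 - a^2) * sqrt (1/2 + a * cos (2*s)) * cos (phi phi0 a s).

Definition first_pos_zero (f : R -> R) (s1 : R) : Prop :=
  0 < s1 /\ f s1 = 0 /\ forall s, 0 < s < s1 -> f s <> 0.

(* closed geodesic ball of radius r about p_N = (1,0,0,0) in S^3 *)
Definition in_ball_pN (r : R) (p : R * R * R * R) : Prop :=
  let '(x1, x2, x3, x4) := p in
  x1^2 + x2^2 + x3^2 + x4^2 = 1 /\ cos r <= x1.

From Stdlib Require Import Reals Lra Psatz.
From Coquelicot Require Import Coquelicot.
Open Scope R_scope.

(* With W = 1/2 + a cos 2s, U = 1/2 - a cos 2s and b = sqrt (1/4 - a^2), one computes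
   x' = sqrt W * M with M = N / (W sqrt U), N = a sin 2s sqrt W cos phi - b sin phi, and
   M' = -2 b f / (W^2 sqrt U).  As M(0) = 0 and f >= 0 up to its first zero s1, x decreases
   on [0, s1]; x is even, so X_a stays in {x^1 >= x(s1)}, and cos r = x(s1).
   At s1, f = 0 turns the identity b f + a sin 2s N = sqrt W cos phi (b^2 + a^2 sin^2 2s)
   into sign (cos phi(s1)) = - sign a, once N(s1) < 0 and sin 2s1 > 0.  The latter, s1 < PI/2,
   holds because phi(PI/2) > PI/2, whereas f >= 0 and N <= 0 on [0, PI/2] would confine phi
   to [0, PI/2] (a < 0) or force cos phi(PI/2) >= 0 with phi(PI/2) <= PI (a >= 0). *)

Lemma abs_mul_cos_lt_half c t : -(1/2) < c < 1/2 -> -(1/2) < c * cos t < 1/2.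
Proof.
  intros Hc. pose proof (COS_bound t).
  destruct (Rle_dec 0 c); split; nra.
Qed.

Lemma nonneg_of_mul_pos_l x y : 0 < x -> 0 <= x * y -> 0 <= y.
Proof.
  intros Hx Hxy. apply (Rmult_le_reg_l x); [exact Hx|]. now rewrite Rmult_0_r.
Qed.

Lemma le_of_derive_nonneg (f df : R -> R) (u v : R) : u <= v ->
  (forall x, u <= x <= v -> is_derive f x (df x)) ->
  (forall x, u <= x <= v -> 0 <= df x) -> f u <= f v.
Proof.
  intros Huv Hf Hdf.
  destruct (MVT_gen f u v df) as [c [Hc E]].
  - intros x Hx. rewrite Rmin_left, Rmax_right in Hx by lra. apply Hf; lra.
  - intros x Hx. rewrite Rmin_left, Rmax_right in Hx by lra.
    apply continuity_pt_filterlim, (@ex_derive_continuous R_AbsRing R_NormedModule).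
    exists (df x). apply Hf; lra.
  - rewrite Rmin_left, Rmax_right in Hc by lra.
    assert (0 <= df c * (v - u)) by (apply Rmult_le_pos; [apply Hdf |]; lra). lra.
Qed.

Lemma le_of_derive_nonpos (f df : R -> R) (u v : R) : u <= v ->
  (forall x, u <= x <= v -> is_derive f x (df x)) ->
  (forall x, u <= x <= v -> df x <= 0) -> f v <= f u.
Proof.
  intros Huv Hf Hdf.
  enough (- f u <= - f v) by lra.
  apply (le_of_derive_nonneg (fun x => - f x) (fun x => - df x)); [exact Huv | |].
  - intros x Hx. apply (is_derive_opp f), Hf, Hx.
  - intros x Hx. specialize (Hdf x Hx). lra.
Qed.

Lemma ivt_from_zero (g : R -> R) T v : continuity g -> g 0 = 0 -> 0 <= T ->
  0 <= v <= g T -> exists t, 0 <= t <= T /\ g t = v.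
Proof.
  intros Hg Hg0 HT Hv.
  destruct (IVT_gen g 0 T v Hg) as [t [Ht E]].
  { rewrite Hg0, Rmin_left, Rmax_right by lra. lra. }
  rewrite Rmin_left, Rmax_right in Ht by lra. exists t. split; assumption.
Qed.

Lemma le_PI2_of_cos_nonneg (g : R -> R) T : continuity g -> g 0 = 0 -> 0 <= T ->
  (forall t, 0 <= t <= T -> 0 <= cos (g t)) -> g T <= PI/2.
Proof.
  intros Hg Hg0 HT Hcos. destruct (Rle_lt_dec (g T) (PI/2)) as [|HgT]; [assumption | exfalso].
  pose proof PI_RGT_0.
  destruct (ivt_from_zero g T (Rmin (g T) PI) Hg Hg0 HT) as [t [Ht E]].
  { split; [apply Rmin_glb |apply Rmin_l]; lra. }
  pose proof (Hcos t Ht) as Hc. rewrite E in Hc.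
  assert (cos (Rmin (g T) PI) < 0)
    by (apply cos_lt_0; [apply Rmin_glb_lt | pose proof (Rmin_r (g T) PI)]; lra).
  lra.
Qed.

Lemma le_PI_of_sin_nonneg (g : R -> R) T : continuity g -> g 0 = 0 -> 0 <= T ->
  (forall t, 0 <= t <= T -> 0 <= sin (g t)) -> g T <= PI.
Proof.
  intros Hg Hg0 HT Hsin. destruct (Rle_lt_dec (g T) PI) as [|HgT]; [assumption | exfalso].
  pose proof PI_RGT_0.
  destruct (ivt_from_zero g T (Rmin (g T) (3*(PI/2))) Hg Hg0 HT) as [t [Ht E]].
  { split; [apply Rmin_glb |apply Rmin_l]; lra. }
  pose proof (Hsin t Ht) as Hs. rewrite E in Hs.
  assert (sin (Rmin (g T) (3*(PI/2))) < 0)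
    by (apply sin_lt_0; [apply Rmin_glb_lt | pose proof (Rmin_r (g T) (3*(PI/2)))]; lra).
  lra.
Qed.

Lemma acos_lt_PI2 x : 0 < x <= 1 -> acos x < PI/2.
Proof.
  intros Hx. pose proof (acos_bound x).
  destruct (Rlt_le_dec (acos x) (PI/2)) as [|Hge]; [assumption|].
  assert (cos (acos x) <= 0) by (apply cos_le_0; lra). rewrite cos_acos in * by lra. lra.
Qed.

Lemma acos_gt_PI2 x : -1 <= x < 0 -> PI/2 < acos x.
Proof.
  intros Hx. pose proof (acos_bound x).
  destruct (Rlt_le_dec (PI/2) (acos x)) as [|Hge]; [assumption|].
  assert (0 <= cos (acos x)) by (apply cos_ge_0; lra). rewrite cos_acos in * by lra. lra.
Qed.

Section Profile.

Variable a : R.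
Hypothesis Ha : -(1/2) < a < 1/2.

Local Notation W s := (1/2 + a * cos (2*s)).
Local Notation U s := (1/2 - a * cos (2*s)).
Local Notation b := (sqrt (1/4 - a^2)).

Lemma W_pos s : 0 < W s.
Proof. pose proof (abs_mul_cos_lt_half a (2*s) Ha). lra. Qed.

Lemma U_pos s : 0 < U s.
Proof. pose proof (abs_mul_cos_lt_half a (2*s) Ha). lra. Qed.

Lemma b_pos : 0 < b.
Proof. apply sqrt_lt_R0. nra. Qed.

Lemma psi_pos t : 0 < psi a t.
Proof.
  pose proof (W_pos t). pose proof (U_pos t). pose proof b_pos.
  apply Rdiv_lt_0_compat; [lra|]. apply Rmult_lt_0_compat; [apply sqrt_lt_R0|]; lra.
Qed.

Lemma psi_continuous t : continuous (psi a) t.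
Proof.
  apply (@ex_derive_continuous R_AbsRing R_NormedModule).
  pose proof (W_pos t). pose proof (U_pos t).
  unfold psi. auto_derive. repeat split; try lra.
  apply Rgt_not_eq, Rmult_gt_0_compat; [apply sqrt_lt_R0|]; lra.
Qed.

Lemma psi_even t : psi a (-t) = psi a t.
Proof. unfold psi. replace (2 * - t) with (-(2*t)) by ring. now rewrite cos_neg. Qed.

Lemma phi_derive phi0 s : is_derive (phi phi0 a) s (psi a s).
Proof.
  assert (HI : is_derive (RInt (psi a) 0) s (psi a s)).
  { apply is_derive_RInt with (a := 0); [|apply psi_continuous].
    apply filter_forall. intros y. apply RInt_correct, ex_RInt_continuous.
    intros; apply psi_continuous. }
  unfold phi. replace (psi a s) with (0 + psi a s) by ring.
  apply (is_derive_plus (fun _ => phi0) (RInt (psi a) 0)); [|exact HI].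
  apply (is_derive_const (K := R_AbsRing) (V := R_NormedModule)).
Qed.

Lemma phi_continuous phi0 : continuity (phi phi0 a).
Proof.
  intros s. apply continuity_pt_filterlim, (@ex_derive_continuous R_AbsRing R_NormedModule).
  exists (psi a s). apply phi_derive.
Qed.

Lemma phi_at_0 phi0 : phi phi0 a 0 = phi0.
Proof. unfold phi. rewrite RInt_point. apply Rplus_0_r. Qed.

Lemma phi_odd s : phi 0 a (-s) = - phi 0 a s.
Proof.
  unfold phi. rewrite !Rplus_0_l.
  replace (RInt (psi a) 0 (-s)) with (RInt (psi a) (-0) (-s)) by (now rewrite Ropp_0).
  rewrite <- (RInt_comp (psi a) Ropp (fun _ => -1) 0 s).
  - rewrite (RInt_ext _ (fun y => - psi a y)).
    + apply (RInt_opp (V := R_CompleteNormedModule)), ex_RInt_continuous.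
      intros; apply psi_continuous.
    + intros y _. rewrite psi_even. unfold scal; simpl; unfold mult; simpl. ring.
  - intros; apply psi_continuous.
  - intros x _. split; [auto_derive; [trivial | ring] | apply continuous_const].
Qed.

Ltac rewrite_Derive_phi :=
  repeat match goal with |- context [Derive (fun x => phi ?p a x) ?y] =>
  replace (Derive (fun x => phi p a x) y) with (psi a y)
    by (symmetry; apply is_derive_unique, phi_derive) end.

Definition dx_num s := a * sin (2*s) * sqrt (W s) * cos (phi 0 a s) - b * sin (phi 0 a s).

Definition dx_ratio s := dx_num s / (W s * sqrt (U s)).

Lemma xa_derive s : is_derive (xa 0 a) s (sqrt (W s) * dx_ratio s).
Proof.
  pose proof (W_pos s). pose proof (U_pos s).
  unfold xa. auto_derive.
  { repeat split; try lra. exists (psi a s). apply phi_derive. }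
  rewrite_Derive_phi. unfold psi, dx_ratio, dx_num.
  replace (1/2 + - (a * cos (2 * s))) with (U s) by ring.
  assert (Hu : U s = sqrt (U s) * sqrt (U s)) by (rewrite sqrt_sqrt; lra).
  assert (Hw : W s = sqrt (W s) * sqrt (W s)) by (rewrite sqrt_sqrt; lra).
  assert (0 < sqrt (U s)) by (apply sqrt_lt_R0; lra).
  assert (0 < sqrt (W s)) by (apply sqrt_lt_R0; lra).
  set (u := sqrt (U s)) in *. set (w := sqrt (W s)) in *.
  rewrite Hu, Hw. field. lra.
Qed.

Lemma dx_ratio_derive s :
  is_derive dx_ratio s (-2 * b * fa 0 a s / ((W s)^2 * sqrt (U s))).
Proof.
  pose proof (W_pos s). pose proof (U_pos s).
  unfold dx_ratio, dx_num. auto_derive.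
  { repeat split; try lra; try (exists (psi a s); apply phi_derive).
    apply Rgt_not_eq, Rmult_gt_0_compat; [lra | apply sqrt_lt_R0; lra]. }
  rewrite_Derive_phi. unfold psi, fa.
  replace (1/2 + - (a * cos (2 * s))) with (U s) by ring.
  (* [auto_derive] has unfolded the constant [a^2] inside [b]. *)
  replace (a * (a * 1)) with (a^2) by ring.
  pose proof (sin2_cos2 (2*s)) as Hsc. unfold Rsqr in Hsc.
  assert (Hb : b * b = 1/4 - a^2) by (rewrite sqrt_sqrt; nra).
  assert (Hu : U s = sqrt (U s) * sqrt (U s)) by (rewrite sqrt_sqrt; lra).
  assert (Hw : W s = sqrt (W s) * sqrt (W s)) by (rewrite sqrt_sqrt; lra).
  assert (0 < sqrt (U s)) by (apply sqrt_lt_R0; lra).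
  assert (0 < sqrt (W s)) by (apply sqrt_lt_R0; lra).
  set (bb := b) in *. set (u := sqrt (U s)) in *. set (w := sqrt (W s)) in *.
  rewrite Hu, Hw. field_simplify; [|lra|lra].
  replace (sin (2*s) ^ 2) with (1 - cos (2*s) ^ 2) by nra.
  replace (w^3) with (w * W s) by (rewrite Hw; ring).
  replace (w^4) with ((W s)^2) by (rewrite Hw; ring).
  replace (u^3) with (u * U s) by (rewrite Hu; ring).
  replace (u^2) with (U s) by (rewrite Hu; ring).
  replace (bb^2) with (1/4 - a^2) by (rewrite <- Hb; ring).
  field. lra.
Qed.

Lemma fa_continuous : continuity (fa 0 a).
Proof.
  intros s. pose proof (W_pos s).
  apply continuity_pt_filterlim, (@ex_derive_continuous R_AbsRing R_NormedModule).
  unfold fa. auto_derive. repeat split; try lra; exists (psi a s); apply phi_derive.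
Qed.

Lemma fa_at_0_pos : 0 < fa 0 a 0.
Proof.
  unfold fa. rewrite phi_at_0, Rmult_0_r, sin_0, cos_0, Rmult_1_r.
  pose proof (W_pos 0) as HW. rewrite Rmult_0_r, cos_0 in HW.
  pose proof b_pos. assert (0 < sqrt (1/2 + a * 1)) by (apply sqrt_lt_R0; lra). nra.
Qed.

Lemma dx_ratio_at_0 : dx_ratio 0 = 0.
Proof.
  unfold dx_ratio, dx_num. rewrite phi_at_0, Rmult_0_r, !sin_0. unfold Rdiv. ring.
Qed.

Lemma atan_tan_scaled_derive t : cos t <> 0 ->
  is_derive (fun t => atan (b / (1/2 - a) * tan t)) t (b / U t).
Proof.
  intros Hc. pose proof (U_pos t). pose proof b_pos.
  assert (Hb : b * b = 1/4 - a^2) by (rewrite sqrt_sqrt; nra).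
  pose proof (sin2_cos2 t) as Hsc. unfold Rsqr in Hsc.
  rewrite cos_2a in *.
  unfold tan. auto_derive; [exact Hc|].
  replace (a * (a * 1)) with (a^2) by ring.
  set (bb := b) in *. set (C := cos t) in *. set (S := sin t) in *.
  assert (0 < C * C) by (apply Rsqr_pos_lt in Hc; exact Hc).
  assert (HD : 1 + bb / (1/2 - a) * (S * / C) * (bb / (1/2 - a) * (S * / C) * 1)
     = (1/2 - a * (C*C - S*S)) / ((1/2 - a) * (C * C))).
  { field_simplify; [|lra|lra].
    replace (bb^2) with (1/4 - a^2) by (rewrite <- Hb; ring).
    replace (S^2) with (1 - C^2) by (rewrite <- Hsc; ring).
    assert (0 < 1 - 2 * a) by lra.
    field. split; apply Rgt_not_eq.
    - replace (-2 * a * C^2 + C^2) with ((C * C) * (1 - 2 * a)) by ring.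
      apply Rmult_lt_0_compat; lra.
    - replace (4 * a^2 * C^2 - 4 * a * C^2 + C^2) with ((C * C) * ((1 - 2 * a) * (1 - 2 * a)))
        by ring.
      apply Rmult_lt_0_compat; [|apply Rmult_lt_0_compat]; lra. }
  rewrite HD. replace (1 * C * / C + S * (- (1 * - S) * / (C * C))) with ((S*S + C*C) / (C*C))
    by (field; lra).
  rewrite Hsc. field. repeat split; lra.
Qed.

(* [W <= m := 1/2 + |a| < 1], and [lam := 2/(1+m)] satisfies [lam^2 m <= 1] by AM-GM. *)
Lemma psi_dominates : exists lam, 1 < lam /\ forall t, lam * (b / U t) <= psi a t.
Proof.
  set (m := 1/2 + Rabs a).
  assert (Hm : 1/2 <= m < 1) by (unfold m; split_Rabs; lra).
  exists (2 / (1 + m)). split.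
  { apply Rmult_lt_reg_r with (1 + m); [lra|]. field_simplify; lra. }
  intros t. pose proof (W_pos t). pose proof (U_pos t). pose proof b_pos.
  assert (Hw : 0 < sqrt (W t)) by (apply sqrt_lt_R0; lra).
  assert (Hw2 : sqrt (W t) * sqrt (W t) = W t) by (apply sqrt_sqrt; lra).
  assert (HWm : W t <= m) by (pose proof (COS_bound (2*t)); unfold m; split_Rabs; nra).
  assert (Hlw : 2 / (1 + m) * sqrt (W t) <= 1).
  { assert (Hsq : 2 / (1 + m) * (2 / (1 + m)) * m <= 1).
    { replace (2 / (1 + m) * (2 / (1 + m)) * m) with (4 * m / ((1 + m) * (1 + m))) by (field; lra).
      apply Rmult_le_reg_r with ((1 + m) * (1 + m)); [nra|]. field_simplify; nra. }
    assert (0 < 2 / (1 + m)) by (apply Rdiv_lt_0_compat; lra). nra. }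
  unfold psi.
  set (w := sqrt (W t)) in *. set (u := U t) in *. set (bb := b) in *.
  replace (bb / (w * u)) with (2 / (1 + m) * (bb / u) + bb / (w * u) * (1 - 2 / (1 + m) * w))
    by (field; lra).
  enough (0 <= bb / (w * u) * (1 - 2 / (1 + m) * w)) by lra.
  apply Rmult_le_pos; [apply Rlt_le, Rdiv_lt_0_compat; nra | lra].
Qed.

(* Comparison with [lam * atan (k tan t)], whose derivative [lam b / U] is at most [psi],
   evaluated where [atan (k tan t) = al], with [al < PI/2] chosen so that [lam al > PI/2]. *)
Lemma phi_half_pi_gt : PI/2 < phi 0 a (PI/2).
Proof.
  pose proof PI_RGT_0. pose proof b_pos.
  destruct psi_dominates as [lam [Hlam Hpsi]].
  set (k := b / (1/2 - a)).
  assert (Hk : 0 < k) by (unfold k; apply Rdiv_lt_0_compat; lra).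
  set (al := (PI / (2 * lam) + PI/2) / 2).
  assert (Hpl : 0 < PI / (2 * lam) < PI/2).
  { split; [apply Rdiv_lt_0_compat; lra|].
    apply Rmult_lt_reg_r with (2 * lam); [lra|]. field_simplify; [nra | lra]. }
  assert (Hal : 0 < al < PI/2) by (unfold al; lra).
  assert (Hlal : PI/2 < lam * al).
  { unfold al. replace (lam * ((PI / (2 * lam) + PI/2) / 2)) with (PI/4 + lam * PI/4)
      by (field; lra). nra. }
  pose proof (tan_gt_0 al ltac:(lra) ltac:(lra)) as Htal.
  set (s := atan (tan al / k)).
  assert (Hs : 0 < s < PI/2).
  { split; [unfold s; rewrite <- atan_0; apply atan_increasing, Rdiv_lt_0_compat; lra|].
    pose proof (atan_bound (tan al / k)). unfold s. lra. }
  assert (Hks : atan (k * tan s) = al).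
  { unfold s. rewrite tan_atan. replace (k * (tan al / k)) with (tan al) by (field; lra).
    apply atan_tan; lra. }
  assert (Hcmp : lam * atan (k * tan s) - phi 0 a s <= lam * atan (k * tan 0) - phi 0 a 0).
  { apply (le_of_derive_nonpos (fun t => lam * atan (k * tan t) - phi 0 a t)
             (fun t => lam * (b / U t) - psi a t)); [lra | |].
    - intros t Ht. apply (is_derive_minus (fun t => lam * atan (k * tan t)) (phi 0 a));
        [|apply phi_derive].
      apply (is_derive_scal (fun t => atan (k * tan t))), atan_tan_scaled_derive.
      apply Rgt_not_eq, cos_gt_0; lra.
    - intros t _. specialize (Hpsi t). lra. }
  assert (Hmono : phi 0 a s <= phi 0 a (PI/2)).
  { apply (le_of_derive_nonneg _ (psi a)); [lra | intros; apply phi_derive |].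
    intros; apply Rlt_le, psi_pos. }
  rewrite tan_0, Rmult_0_r, atan_0, phi_at_0, Hks in Hcmp. lra.
Qed.

(* [(fa, dx_num)] is the image of [(sqrt W cos phi, sin phi)] under the symmetric matrix
   [[b, a sin 2s], [a sin 2s, -b]], whose square is [b^2 + a^2 sin^2 2s] times the identity. *)
Lemma fa_dx_num_cos s : b * fa 0 a s + a * sin (2*s) * dx_num s =
  sqrt (W s) * cos (phi 0 a s) * (b * b + (a * sin (2*s))^2).
Proof. unfold fa, dx_num. ring. Qed.

Lemma fa_dx_num_sin s : a * sin (2*s) * fa 0 a s - b * dx_num s =
  sin (phi 0 a s) * (b * b + (a * sin (2*s))^2).
Proof. unfold fa, dx_num. ring. Qed.

Lemma rotation_scale_pos s : 0 < b * b + (a * sin (2*s))^2.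
Proof. pose proof b_pos. nra. Qed.

Lemma xa_even s : xa 0 a (-s) = xa 0 a s.
Proof.
  unfold xa. rewrite phi_odd, cos_neg. replace (2 * - s) with (-(2*s)) by ring.
  now rewrite cos_neg.
Qed.

Lemma xa_bound s : -1 <= xa 0 a s <= 1.
Proof.
  unfold xa. pose proof (U_pos s). pose proof (W_pos s).
  assert (Hu2 : sqrt (U s) * sqrt (U s) = U s) by (apply sqrt_sqrt; lra).
  pose proof (sqrt_pos (U s)). pose proof (COS_bound (phi 0 a s)).
  assert (sqrt (U s) <= 1) by nra. nra.
Qed.

Lemma Xa_on_sphere phi0 s theta :
  xa phi0 a s ^ 2 + ya phi0 a s ^ 2 + (za a s * cos theta) ^ 2 + (za a s * sin theta) ^ 2 = 1.
Proof.
  unfold xa, ya, za. pose proof (U_pos s). pose proof (W_pos s).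
  rewrite !Rpow_mult_distr, <- !Rsqr_pow2, !Rsqr_sqrt by lra.
  pose proof (sin2_cos2 (phi phi0 a s)). pose proof (sin2_cos2 theta). nra.
Qed.

Section FirstZero.

Variable s1 : R.
Hypothesis Hs1 : first_pos_zero (fa 0 a) s1.

Lemma fa_nonneg_to_first_zero s : 0 <= s <= s1 -> 0 <= fa 0 a s.
Proof.
  intros Hs. destruct Hs1 as [Hs1_pos [Hf Hnz]].
  destruct (Rle_lt_dec 0 (fa 0 a s)) as [|Hneg]; [assumption | exfalso].
  pose proof fa_at_0_pos.
  destruct (IVT_gen (fa 0 a) 0 s 0 fa_continuous) as [t [Ht Et]].
  { rewrite Rmin_right, Rmax_left by lra. lra. }
  rewrite Rmin_left, Rmax_right in Ht by lra.
  destruct (Req_dec t 0) as [->|Ht0]; [lra|].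
  destruct (Req_dec s s1) as [->|Hss1]; [lra|].
  apply (Hnz t); [lra | exact Et].
Qed.

Lemma dx_ratio_nonpos s : 0 <= s <= s1 -> dx_ratio s <= 0.
Proof.
  intros Hs. rewrite <- dx_ratio_at_0.
  apply (le_of_derive_nonpos dx_ratio
           (fun t => -2 * b * fa 0 a t / ((W t)^2 * sqrt (U t))) 0 s);
    [lra | intros; apply dx_ratio_derive |].
  intros t Ht. pose proof (fa_nonneg_to_first_zero t ltac:(lra)). pose proof b_pos.
  pose proof (W_pos t). pose proof (U_pos t).
  assert (0 < (W t)^2 * sqrt (U t))
    by (apply Rmult_lt_0_compat; [apply pow_lt | apply sqrt_lt_R0]; lra).
  unfold Rdiv. apply Rmult_le_0_r; [nra | apply Rlt_le, Rinv_0_lt_compat; lra].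
Qed.

Lemma dx_num_nonpos s : 0 <= s <= s1 -> dx_num s <= 0.
Proof.
  intros Hs. pose proof (dx_ratio_nonpos s Hs) as HM. unfold dx_ratio in HM.
  pose proof (W_pos s). pose proof (U_pos s).
  assert (HD : 0 < W s * sqrt (U s)) by (apply Rmult_lt_0_compat; [|apply sqrt_lt_R0]; lra).
  set (D := W s * sqrt (U s)) in *.
  replace (dx_num s) with (dx_num s / D * D) by (field; lra).
  nra.
Qed.

Lemma xa_first_zero_le s : 0 <= s <= s1 -> xa 0 a s1 <= xa 0 a s.
Proof.
  intros Hs.
  apply (le_of_derive_nonpos (xa 0 a) (fun t => sqrt (W t) * dx_ratio t) s s1);
    [lra | intros; apply xa_derive |].
  intros t Ht. pose proof (dx_ratio_nonpos t ltac:(lra)).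
  pose proof (sqrt_pos (W t)). nra.
Qed.

Lemma first_zero_lt_PI2 : s1 < PI/2.
Proof.
  destruct (Rlt_le_dec s1 (PI/2)) as [|Hge]; [assumption | exfalso].
  pose proof PI_RGT_0. pose proof b_pos. pose proof phi_half_pi_gt.
  assert (Hsign : forall t, 0 <= t <= PI/2 -> 0 <= sin (2*t) /\ 0 <= fa 0 a t /\ dx_num t <= 0).
  { intros t Ht. split; [apply sin_ge_0; lra|].
    split; [apply fa_nonneg_to_first_zero | apply dx_num_nonpos]; lra. }
  destruct (Rlt_le_dec a 0) as [Hneg | Hnneg].
  - enough (phi 0 a (PI/2) <= PI/2) by lra.
    apply (le_PI2_of_cos_nonneg _ _ (phi_continuous 0) (phi_at_0 0)); [lra|].
    intros t Ht. destruct (Hsign t Ht) as [Hs [Hf HN]].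
    apply (nonneg_of_mul_pos_l (sqrt (W t) * (b * b + (a * sin (2*t))^2))).
    { apply Rmult_lt_0_compat; [apply sqrt_lt_R0, W_pos | apply rotation_scale_pos]. }
    replace (sqrt (W t) * (b * b + (a * sin (2*t))^2) * cos (phi 0 a t))
      with ((- a) * sin (2*t) * (- dx_num t) + b * fa 0 a t)
      by (pose proof (fa_dx_num_cos t); lra).
    apply Rplus_le_le_0_compat; apply Rmult_le_pos; try apply Rmult_le_pos; lra.
  - assert (Hle : phi 0 a (PI/2) <= PI).
    { apply (le_PI_of_sin_nonneg _ _ (phi_continuous 0) (phi_at_0 0)); [lra|].
      intros t Ht. destruct (Hsign t Ht) as [Hs [Hf HN]].
      apply (nonneg_of_mul_pos_l (b * b + (a * sin (2*t))^2)); [apply rotation_scale_pos|].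
      replace ((b * b + (a * sin (2*t))^2) * sin (phi 0 a t))
        with (a * sin (2*t) * fa 0 a t + b * (- dx_num t))
        by (pose proof (fa_dx_num_sin t); lra).
      apply Rplus_le_le_0_compat; apply Rmult_le_pos; try apply Rmult_le_pos; lra. }
    assert (Hcos : cos (phi 0 a (PI/2)) < 0) by (apply cos_lt_0; lra).
    destruct (Hsign (PI/2) ltac:(lra)) as [_ [Hf _]].
    unfold fa in Hf. replace (2 * (PI/2)) with PI in Hf by field. rewrite sin_PI in Hf.
    assert (0 < sqrt (1/2 + a * cos PI))
      by (replace PI with (2 * (PI/2)) by field; apply sqrt_lt_R0, W_pos).
    assert (0 < b * sqrt (1/2 + a * cos PI)) by (apply Rmult_lt_0_compat; lra).
    nra.
Qed.

Lemma xa_first_zero_opp_sign : exists k, 0 < k /\ xa 0 a s1 = - (k * a).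
Proof.
  destruct Hs1 as [Hs1_pos [Hf _]].
  pose proof first_zero_lt_PI2. pose proof PI_RGT_0. pose proof b_pos.
  pose proof (fa_dx_num_cos s1) as Hcos. pose proof (fa_dx_num_sin s1) as Hsin.
  rewrite Hf in Hcos, Hsin.
  pose proof (rotation_scale_pos s1) as HK.
  set (K := b * b + (a * sin (2*s1))^2) in *.
  assert (Hw : 0 < sqrt (W s1)) by (apply sqrt_lt_R0, W_pos).
  assert (Hu : 0 < sqrt (U s1)) by (apply sqrt_lt_R0, U_pos).
  assert (Hs2 : 0 < sin (2*s1)) by (apply sin_gt_0; lra).
  assert (HN : dx_num s1 < 0).
  { destruct (Rle_lt_or_eq_dec _ _ (dx_num_nonpos s1 ltac:(lra))) as [|HN0]; [assumption | exfalso].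
    rewrite HN0 in Hcos, Hsin.
    assert (Hs0 : sin (phi 0 a s1) = 0) by (apply (Rmult_eq_reg_r K); lra).
    assert (Hc0 : cos (phi 0 a s1) = 0).
    { apply (Rmult_eq_reg_l (sqrt (W s1))); [apply (Rmult_eq_reg_r K); lra | lra]. }
    pose proof (sin2_cos2 (phi 0 a s1)) as Hsc. rewrite Hs0, Hc0 in Hsc. unfold Rsqr in Hsc.
    lra. }
  exists (sqrt (U s1) * sin (2*s1) * (- dx_num s1) / (sqrt (W s1) * K)).
  split.
  - apply Rdiv_lt_0_compat; [|apply Rmult_lt_0_compat]; try lra.
    apply Rmult_lt_0_compat; [apply Rmult_lt_0_compat|]; lra.
  - unfold xa.
    replace (cos (phi 0 a s1)) with (sqrt (W s1) * cos (phi 0 a s1) * K / (sqrt (W s1) * K))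
      by (field; lra).
    rewrite <- Hcos. field. lra.
Qed.

Lemma Xa_in_first_zero_ball s theta : -s1 <= s <= s1 ->
  in_ball_pN (acos (xa 0 a s1)) (Xa 0 a s theta).
Proof.
  intros Hs. unfold in_ball_pN, Xa. split; [apply Xa_on_sphere|].
  rewrite cos_acos by apply xa_bound.
  destruct (Rle_dec 0 s).
  - apply xa_first_zero_le. lra.
  - rewrite <- (xa_even s). apply xa_first_zero_le. lra.
Qed.

End FirstZero.

End Profile.

Theorem mainTheorem7 :
  forall (a s1 : R), -(1/2) < a < 1/2 ->
  first_pos_zero (fa 0 a) s1 ->
  let r := acos (xa 0 a s1) in
  cos r = xa 0 a s1 /\
  (forall s theta, -s1 <= s <= s1 -> in_ball_pN r (Xa 0 a s theta)) /\
  (a < 0 -> r < PI/2) /\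
  (a = 0 -> r = PI/2) /\
  (0 < a -> r > PI/2).
Proof.
  intros a s1 Ha Hs1 r.
  pose proof (xa_bound a Ha s1) as Hx.
  destruct (xa_first_zero_opp_sign a Ha s1 Hs1) as [k [Hk Hxk]].
  split; [apply cos_acos, Hx|].
  split; [intros; apply Xa_in_first_zero_ball; assumption|].
  unfold r. rewrite Hxk in *. split; [|split]; intros Hsign.
  - apply acos_lt_PI2. nra.
  - rewrite Hsign, Rmult_0_r, Ropp_0. apply acos_0.
  - apply acos_gt_PI2. nra.
Qed.
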